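(* For a topological space $X$, the following statements are equivalent: (1) $X$ is a uniformizable Alexandroff space; (2) $\{V(a):a\in X\}$ is a partition of $X$ into open subsets of $X$; (3) there exists a partition $\mathcal P$ of $X$ such that $\mathcal F_{\mathcal P}:=\{\alpha\subseteq X\times X:\bigcup\{D\times D:D\in\mathcal P\}\subseteq\alpha\}$ is a uniform structure compatible with the topology of $X$; (4) $X$ is an Alexandroff space and for all $a\in X$ and all $b\in V(a)$ we have $V(b)=V(a)$; (5) $X$ is an Alexandroff space and the relation $\{(a,b)\in X\times X: V(b)\subseteq V(a)\}$ is an equivalence relation on $X$; (6) the quotient space $X/\Re$ is discrete, where $\Re:=\{(a,b)\in X\times X:V(b)=V(a)\}$ and $X/\Re$ carries the quotient topology with respect to the natural map $\pi:X\to X/\Re$, $\pi(x)=$ the $\Re$-class of $x$.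
   Context: For a topological space $X$ and $a\in X$, $V(a):=\bigcap\{U: U\text{ open}, a\in U\}$. $X$ is an Alexandroff space if $V(a)$ is open for every $a\in X$. A uniform structure $\mathcal F$ on $X$ is a nonempty family of subsets of $X\times X$ such that for each $\alpha\in\mathcal F$: $\Delta_X\subseteq\alpha$; supersets of $\alpha$ in $X\times X$ belong to $\mathcal F$; $\alpha\cap\beta\in\mathcal F$ for $\beta\in\mathcal F$; $\alpha^{-1}\in\mathcal F$; some $\beta\in\mathcal F$ satisfies $\beta\circ\beta\subseteq\alpha$. It induces the topology $\tau_{\mathcal F}=\{U\subseteq X:\forall x\in U\ \exists \alpha\in\mathcal F\ \alpha[x]\subseteq U\}$ with $\alpha[x]=\{y:(x,y)\in\alpha\}$. $\mathcal F$ is compatible with the topology of $X$ if $\tau_{\mathcal F}$ equals that topology; $X$ is uniformizable if some compatible uniform structure exists. *)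

From HB Require Import structures.
From mathcomp Require Import all_boot all_order.
From mathcomp Require Import boolp classical_sets topology.
Set Implicit Arguments. Unset Strict Implicit. Unset Printing Implicit Defensive.
Local Open Scope classical_set_scope.

Section AlexDefs.
Variable X : topologicalType.

Definition Vn (a : X) : set X := \bigcap_(U in [set U : set X | open U /\ U a]) U.

Definition alexandroff : Prop := forall a : X, open (Vn a).

Definition is_partition (P : set (set X)) : Prop :=
  [/\ forall D, P D -> D !=set0,
      forall D E, P D -> P E -> D <> E -> D `&` E = set0
    & forall x : X, exists2 D, P D & D x].

Definition rel_comp (a b : set (X * X)) : set (X * X) :=
  [set p | exists y, a (p.1, y) /\ b (y, p.2)].

Definition rel_inv (a : set (X * X)) : set (X * X) := [set p | a (p.2, p.1)].

Definition diagonal : set (X * X) := [set p | p.1 = p.2].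

Definition is_uniform_structure (F : set (set (X * X))) : Prop :=
  F !=set0 /\
  forall alpha, F alpha ->
    [/\ diagonal `<=` alpha,
        (forall beta, alpha `<=` beta -> F beta),
        (forall beta, F beta -> F (alpha `&` beta)),
        F (rel_inv alpha)
      & exists2 beta, F beta & rel_comp beta beta `<=` alpha].

Definition uniform_topology (F : set (set (X * X))) : set (set X) :=
  [set U | forall x, U x -> exists2 alpha, F alpha & [set y | alpha (x, y)] `<=` U].

Definition compatible (F : set (set (X * X))) : Prop :=
  uniform_topology F = [set U : set X | open U].

Definition uniformizable : Prop :=
  exists F, is_uniform_structure F /\ compatible F.

Definition FP (P : set (set X)) : set (set (X * X)) :=
  [set alpha | [set p | exists2 D, P D & D p.1 /\ D p.2] `<=` alpha].

Definition is_equiv_rel (R : X -> X -> Prop) : Prop :=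
  [/\ forall a, R a a, forall a b, R a b -> R b a
    & forall a b c, R a b -> R b c -> R a c].

Definition Re_class (x : X) : set X := [set y | Vn y = Vn x].

Definition quotRe : Type := {C : set X | exists x, C = Re_class x}.

Definition piRe (x : X) : quotRe := exist _ (Re_class x) (ex_intro _ x erefl).

Definition quotRe_open (S : set quotRe) : Prop := open (piRe @^-1` S).

Definition quotRe_discrete : Prop := forall S : set quotRe, quotRe_open S.

End AlexDefs.

From HB Require Import structures.
From mathcomp Require Import all_boot all_order.
From mathcomp Require Import boolp classical_sets topology.
Local Open Scope classical_set_scope.
Set Implicit Arguments. Unset Strict Implicit.

(* In every space, b in V(a) forces V(b) to be contained in V(a); all six
   conditions say that this specialization relation is symmetric and that the
   sets V(a) are open.  Uniform spaces are symmetric, since a lies in every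
   uniform neighbourhood of b as soon as b lies in the uniform interior of
   every uniform neighbourhood of a.  Conversely, when the V(a) are open
   equivalence classes, the superset filter of the relation "same class" is a
   uniformity whose open sets are exactly the unions of classes, i.e. the
   open sets of X; and X/Re is discrete precisely when each class is the open
   set V(a). *)

Section MinimalNeighbourhoods.
Variable X : topologicalType.
Implicit Types (a b x y : X) (U : set X).

Lemma Vn_self a : Vn a a.
Proof. by move=> U []. Qed.

Lemma Vn_sub_open a U : open U -> U a -> Vn a `<=` U.
Proof. by move=> oU Ua b; apply; split. Qed.

Lemma Vn_trans a b : Vn a b -> Vn b `<=` Vn a.
Proof. by move=> ab c bc U [oU Ua]; apply: bc; split => //; apply: ab. Qed.

Lemma Vn_eq_of_sym : (forall a b, Vn a b -> Vn b a) ->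
  forall a b, Vn a b -> Vn b = Vn a.
Proof.
by move=> sym a b ab; apply/seteqP; split; apply: Vn_trans => //; apply: sym.
Qed.

Lemma alexandroff_openE : alexandroff X ->
  forall U, open U <-> (forall x, U x -> Vn x `<=` U).
Proof.
move=> alx U; split=> [oU x Ux|UV]; first exact: Vn_sub_open.
have -> : U = \bigcup_(x in U) Vn x.
  apply/seteqP; split=> [x Ux|y [x Ux]]; last exact: UV.
  by exists x => //; apply: Vn_self.
by apply: bigcup_open => x _; apply: alx.
Qed.

(* If the open sets are the up-sets of a preorder R, then V(x) = R[x]. *)
Lemma alexandroff_of_preorder_openE (R : X -> X -> Prop) :
  (forall x, R x x) -> (forall x y z, R x y -> R y z -> R x z) ->
  (forall U, open U <-> (forall x, U x -> [set y | R x y] `<=` U)) ->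
  alexandroff X.
Proof.
move=> Rxx Rtr openR x.
have oRx : open [set y | R x y] by apply/openR => y xy z; apply: Rtr.
suff -> : Vn x = [set y | R x y] by [].
apply/seteqP; split; first by apply: Vn_sub_open => //; apply: Rxx.
by move=> y xy U [oU Ux]; apply: (openR U).1 oU x Ux y xy.
Qed.

End MinimalNeighbourhoods.

Section UniformStructures.
Variable X : topologicalType.
Implicit Types (F : set (set (X * X))) (E : set (X * X)).

Lemma uniform_topology_interior F (A : set X) : is_uniform_structure F ->
  uniform_topology F [set x | exists2 d, F d & [set y | d (x, y)] `<=` A].
Proof.
move=> [_ uF] x [d Fd dA]; have [_ _ _ _ [e Fe ed]] := uF d Fd.
by exists e => // y exy; exists e => // z eyz; apply: dA; apply: ed; exists y.
Qed.

Lemma uniformizable_Vn_sym : uniformizable X -> forall a b : X, Vn a b -> Vn b a.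
Proof.
move=> [F [uniF cF]] a b ab U [oU Ub].
have /(_ b Ub) [alpha Falpha alphaU] : uniform_topology F U by rewrite cF.
have [_ uF] := uniF; have [_ _ _ Finv _] := uF alpha Falpha.
pose W := [set x | exists2 d, F d & [set y | d (x, y)] `<=` [set y | alpha (y, a)]].
have oW : open W.
  by rewrite -[open W]/([set U | open U] W) -cF; apply: uniform_topology_interior.
have [d Fd dW] : W b by apply: ab; split => //; exists (rel_inv alpha).
have [diag _ _ _ _] := uF d Fd.
by apply: alphaU; apply: dW; apply: diag.
Qed.

Lemma uniform_supersets_equiv E : is_equiv_rel (fun x y => E (x, y)) ->
  is_uniform_structure [set alpha | E `<=` alpha].
Proof.
move=> [Erefl Esym Etr]; split; first by exists E.
move=> alpha Ealpha; split.
- by move=> [x y] /= xy; apply: Ealpha; rewrite -[y]xy; apply: Erefl.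
- by move=> beta; apply: subset_trans.
- by move=> beta Ebeta p Ep; split; [apply: Ealpha | apply: Ebeta].
- by move=> [x y] /Esym; apply: Ealpha.
- by exists E => // [[x z]] [y [xy yz]]; apply: Ealpha; apply: Etr yz.
Qed.

Lemma uniform_topology_supersets E (U : set X) :
  uniform_topology [set alpha | E `<=` alpha] U <->
  (forall x, U x -> [set y | E (x, y)] `<=` U).
Proof.
split=> [UE x Ux y xy|EU x Ux]; last by exists E => //; apply: EU.
by have [alpha Ealpha alphaU] := UE x Ux; apply: alphaU; apply: Ealpha.
Qed.

End UniformStructures.

Section Partitions.
Variable X : topologicalType.
Implicit Type P : set (set X).

Definition block_rel P : set (X * X) := [set p | exists2 D, P D & D p.1 /\ D p.2].

Lemma block_rel_equiv P :
  is_partition P -> is_equiv_rel (fun x y => block_rel P (x, y)).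
Proof.
move=> [_ disj cover]; split.
- by move=> x; have [D PD Dx] := cover x; exists D.
- by move=> x y [D PD [Dx Dy]]; exists D.
- move=> x y z [D PD [Dx Dy]] [D' PD' [Dy' Dz]]; exists D => //; split => //.
  have [->//|DD'] := pselect (D = D').
  by have : (D `&` D') y by []; rewrite disj.
Qed.

Lemma FP_uniform P : is_partition P -> is_uniform_structure (FP P).
Proof. by move=> /block_rel_equiv; apply: uniform_supersets_equiv. Qed.

Lemma compatible_FP_alexandroff P :
  is_partition P -> compatible (FP P) -> alexandroff X.
Proof.
move=> /block_rel_equiv [Brefl _ Btr] cF.
apply: (alexandroff_of_preorder_openE Brefl Btr) => U.
by rewrite -[open U]/([set U | open U] U) -cF; apply: uniform_topology_supersets.
Qed.

End Partitions.

Section Conditions.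
Variable X : topologicalType.

Definition sym_alexandroff := alexandroff X /\ (forall a b : X, Vn a b -> Vn b = Vn a).

Lemma uniformizable_sym_alexandroff :
  alexandroff X /\ uniformizable X -> sym_alexandroff.
Proof.
by move=> [alx unif]; split => //; apply: Vn_eq_of_sym; apply: uniformizable_Vn_sym.
Qed.

Lemma sym_alexandroff_partition : sym_alexandroff ->
  is_partition (range (@Vn X)) /\ (forall D, range (@Vn X) D -> open D).
Proof.
move=> [alx VnE]; split; last by move=> D [a _ <-].
split.
- by move=> D [a _ <-]; exists a; apply: Vn_self.
- move=> D E [a _ <-] [b _ <-] ab; apply/seteqP; split => // c [ac bc].
  by apply: ab; rewrite -(VnE _ _ ac) -(VnE _ _ bc).
- by move=> x; exists (Vn x); [exists x | apply: Vn_self].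
Qed.

Lemma partition_sym_alexandroff :
  is_partition (range (@Vn X)) /\ (forall D, range (@Vn X) D -> open D) ->
  sym_alexandroff.
Proof.
move=> [[_ disj _] op]; split=> [a|a b ab]; first by apply: op; exists a.
have [//|ba] := pselect (Vn b = Vn a).
have : (Vn b `&` Vn a) b by split => //; apply: Vn_self.
by rewrite disj.
Qed.

Lemma sym_alexandroff_FP : sym_alexandroff ->
  exists2 P : set (set X), is_partition P
    & is_uniform_structure (FP P) /\ compatible (FP P).
Proof.
move=> symX; have [alx VnE] := symX.
have [part _] := sym_alexandroff_partition symX.
exists (range (@Vn X)) => //; split; first exact: FP_uniform.
have blockE x y : block_rel (range (@Vn X)) (x, y) <-> Vn x y.
  split=> [[D [c _ <-] [cx cy]]|xy]; first by rewrite /= (VnE _ _ cx).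
  by exists (Vn x); [exists x | split => //; apply: Vn_self].
apply/seteqP; split=> U /=.
  move=> /uniform_topology_supersets UE; apply/alexandroff_openE => // x Ux y.
  by move=> /blockE; apply: UE.
move=> /alexandroff_openE VU; apply/uniform_topology_supersets => x Ux y.
by move=> /blockE; apply: VU.
Qed.

Lemma FP_uniformizable :
  (exists2 P : set (set X), is_partition P
     & is_uniform_structure (FP P) /\ compatible (FP P)) ->
  alexandroff X /\ uniformizable X.
Proof.
move=> [P part [uF cF]]; split; first exact: compatible_FP_alexandroff part cF.
by exists (FP P).
Qed.

Lemma sym_alexandroff_equiv : sym_alexandroff ->
  alexandroff X /\ is_equiv_rel (fun a b : X => Vn b `<=` Vn a).
Proof.
move=> [alx VnE]; split => //; split=> [a //|a b ba|a b c ba cb].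
  by rewrite (VnE a b) //; apply: ba; apply: Vn_self.
exact: subset_trans cb ba.
Qed.

Lemma equiv_sym_alexandroff :
  alexandroff X /\ is_equiv_rel (fun a b : X => Vn b `<=` Vn a) -> sym_alexandroff.
Proof.
move=> [alx [_ sym _]]; split => //; apply: Vn_eq_of_sym => a b ab.
by apply: (sym _ _ (Vn_trans ab)); apply: Vn_self.
Qed.

Lemma piRe_eqE (x y : X) : piRe x = piRe y <-> Vn x = Vn y.
Proof.
split=> [/(congr1 sval) /= xy|xy]; last by apply: eq_exist; rewrite /Re_class xy.
by have : Re_class y x by rewrite -xy.
Qed.

Lemma piRe_preimage1 (a : X) : @piRe X @^-1` [set piRe a] = Re_class a.
Proof. by apply/seteqP; split => x /piRe_eqE. Qed.

Lemma sym_alexandroff_discrete : sym_alexandroff -> quotRe_discrete X.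
Proof.
move=> [alx VnE] S; apply/alexandroff_openE => // x Sx y /VnE xy.
by rewrite /= (piRe_eqE y x).2.
Qed.

Lemma discrete_sym_alexandroff : quotRe_discrete X -> sym_alexandroff.
Proof.
move=> disc; have VnE (a : X) : Vn a = Re_class a.
  apply/seteqP; split; last by move=> y /= <-; apply: Vn_self.
  by rewrite -piRe_preimage1; apply: Vn_sub_open; [apply: disc|].
split=> [a|a b]; first by rewrite VnE -piRe_preimage1; apply: disc.
by rewrite {1}VnE.
Qed.

End Conditions.

Theorem mainTheorem4 (X : topologicalType) :
  [<-> alexandroff X /\ uniformizable X;
       is_partition (range (@Vn X)) /\ (forall D, range (@Vn X) D -> open D);
       exists2 P : set (set X), is_partition P
         & is_uniform_structure (FP P) /\ compatible (FP P);
       alexandroff X /\ (forall a b : X, Vn a b -> Vn b = Vn a);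
       alexandroff X /\ is_equiv_rel (fun a b : X => Vn b `<=` Vn a);
       quotRe_discrete X].
Proof.
tfae.
- by move/uniformizable_sym_alexandroff/sym_alexandroff_partition.
- by move/partition_sym_alexandroff/sym_alexandroff_FP.
- by move/FP_uniformizable/uniformizable_sym_alexandroff.
- exact: sym_alexandroff_equiv.
- by move/equiv_sym_alexandroff/sym_alexandroff_discrete.
- by move/discrete_sym_alexandroff/sym_alexandroff_FP/FP_uniformizable.
Qed.
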